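(* If $n\ge1$, $m>0$ and $(n,m)\neq(1,1)$, then $|A_{n,m}|=4n$.
   Context: The Yoke graph $Y_{n,m}$ has vertices the tuples $v=(v_0,\dots,v_{m+1})$ with $v_0,v_{m+1}\in\mathbb{Z}_n$, $v_1,\dots,v_m\in\{0,1\}$, $\sum v_i\equiv0\pmod n$; $u\sim v$ iff there is $0\le i\le m$ with $u_j=v_j$ for $j\notin\{i,i+1\}$ and either ($u_i=v_i+1$, $u_{i+1}=v_{i+1}-1$) or ($u_i=v_i-1$, $u_{i+1}=v_{i+1}+1$), buckets mod $n$. Define automorphisms (bucket entries mod $n$): $\varphi(v_0,v_1,\dots,v_m,v_{m+1})=(v_0+1,v_1,\dots,v_m,v_{m+1}-1)$; $\psi(v_0,\dots,v_{m+1})=(v_{m+1},v_m,\dots,v_1,v_0)$; $\tau(v_0,v_1,\dots,v_m,v_{m+1})=(-v_0,1-v_1,\dots,1-v_m,-(m+v_{m+1}))$. $A_{n,m}$ is the subgroup of $\operatorname{Aut}(Y_{n,m})$ generated by $\varphi,\psi,\tau$. *)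

From mathcomp Require Import all_boot all_order all_fingroup all_algebra.
Set Implicit Arguments. Unset Strict Implicit. Unset Printing Implicit Defensive.
Import GRing.Theory.
Local Open Scope ring_scope.

(* Buckets live in Z_n, represented by 'I_(n.-1).+1, which is exactly 'I_n
   (the integers mod n with its additive group structure from zmodp) whenever
   n >= 1, the only case considered. *)
Definition bucket (n : nat) := 'I_(n.-1).+1.

Definition zn (n : nat) (k : nat) : bucket n := Zp1 *+ k.

(* Vertices of the Yoke graph Y_{n,m}: (v_0, (v_1..v_m), v_{m+1}) with
   v_0, v_{m+1} in Z_n, v_i in {0,1} (booleans), and sum v_i = 0 in Z_n. *)
Definition raw n m := (bucket n * m.-tuple bool * bucket n)%type.
Definition vtx_ok n m (x : raw n m) : bool :=
  x.1.1 + zn n (count id x.1.2) + x.2 == 0.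
Definition Vtx n m := {x : raw n m | vtx_ok x}.

Definition coord n m (v : Vtx n m) (i : nat) : int :=
  if i == 0%N then Posz (val v).1.1
  else if i == m.+1 then Posz (val v).2
  else Posz (nth false (val v).1.2 i.-1).

Definition ceq n m (i : nat) (a b : int) : bool :=
  if (i == 0%N) || (i == m.+1) then (a == b %[mod Posz n])%Z else a == b.

(* Adjacency of Y_{n,m}: u ~ v iff for some 0 <= i <= m, u_j = v_j for j not in
   {i, i+1} and (u_i, u_{i+1}) = (v_i + 1, v_{i+1} - 1) or (v_i - 1, v_{i+1} + 1),
   buckets mod n.  (Only for documentation: A_{n,m} below is the group
   generated by phi, psi, tau, which lies in Aut(Y_{n,m}) <= Sym(V).) *)
Definition yoke_adj n m (u v : Vtx n m) : bool :=
  [exists i : 'I_m.+1,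
     [forall j : 'I_m.+2, (j != i :> nat) && (j != i.+1 :> nat) ==>
         ceq n m j (coord u j) (coord v j)] &&
     ((ceq n m i (coord u i) (coord v i + 1) &&
       ceq n m i.+1 (coord u i.+1) (coord v i.+1 - 1)) ||
      (ceq n m i (coord u i) (coord v i - 1) &&
       ceq n m i.+1 (coord u i.+1) (coord v i.+1 + 1)))].

Section Maps.
Variables n m : nat.
Implicit Types x : raw n m.

Definition phi_raw x : raw n m := (x.1.1 + zn n 1, x.1.2, x.2 - zn n 1).
Definition phiinv_raw x : raw n m := (x.1.1 - zn n 1, x.1.2, x.2 + zn n 1).
Definition psi_raw x : raw n m := (x.2, [tuple of rev x.1.2], x.1.1).
Definition tau_raw x : raw n m :=
  (- x.1.1, map_tuple negb x.1.2, - (zn n m + x.2)).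

Lemma phi_ok x : vtx_ok x -> vtx_ok (phi_raw x).
Proof.
case: x => [[a s] b]; rewrite /vtx_ok /= => /eqP H.
by rewrite [a + _ + _]addrAC addrACA subrr addr0 H.
Qed.

Lemma phiinv_ok x : vtx_ok x -> vtx_ok (phiinv_raw x).
Proof.
case: x => [[a s] b]; rewrite /vtx_ok /= => /eqP H.
by rewrite [a + _ + _]addrAC addrACA addNr addr0 H.
Qed.

Lemma psi_ok x : vtx_ok x -> vtx_ok (psi_raw x).
Proof.
case: x => [[a s] b]; rewrite /vtx_ok /= count_rev => /eqP H.
by rewrite addrC [b + _]addrC addrA H.
Qed.

Lemma tau_ok x : vtx_ok x -> vtx_ok (tau_raw x).
Proof.
case: x => [[a s] b]; rewrite /vtx_ok /= => /eqP H.
have -> : count id (map negb (tval s)) = (m - count id s)%N.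
  rewrite count_map -[X in (X - _)%N](size_tuple s) -(count_predC id s) addKn.
  by apply: eq_count => c.
have cm : (count id s <= m)%N by rewrite -{2}(size_tuple s) count_size.
rewrite /zn mulrnBr // -/(zn n m) -/(zn n (count id s)).
by rewrite opprD addrA [- a + _]addrCA [_ - zn n m]addrAC subrr add0r -!opprD H oppr0.
Qed.

Definition phiV (v : Vtx n m) : Vtx n m := Sub (phi_raw (val v)) (phi_ok (valP v)).
Definition phiinvV (v : Vtx n m) : Vtx n m :=
  Sub (phiinv_raw (val v)) (phiinv_ok (valP v)).
Definition psiV (v : Vtx n m) : Vtx n m := Sub (psi_raw (val v)) (psi_ok (valP v)).
Definition tauV (v : Vtx n m) : Vtx n m := Sub (tau_raw (val v)) (tau_ok (valP v)).

Lemma phiVK : cancel phiV phiinvV.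
Proof.
case=> [[[a s] b] h]; apply: val_inj => /=.
by rewrite /phiinv_raw /phi_raw /= addrK subrK.
Qed.

Lemma psiVK : involutive psiV.
Proof.
case=> [[[a s] b] h]; apply: val_inj => /=.
rewrite /psi_raw /=; congr (_, _, _); apply: val_inj => /=; exact: revK.
Qed.

Lemma tauVK : involutive tauV.
Proof.
case=> [[[a s] b] h]; apply: val_inj => /=.
rewrite /tau_raw /= opprK opprD opprK addKr; congr (_, _, _).
by apply: val_inj => /=; rewrite -map_comp map_id_in // => c _ /=; rewrite negbK.
Qed.

Definition phi : {perm Vtx n m} := perm (can_inj phiVK).
Definition psi : {perm Vtx n m} := perm (inv_inj psiVK).
Definition tau : {perm Vtx n m} := perm (inv_inj tauVK).

End Maps.

Definition A_group n m : {group {perm Vtx n m}} :=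
  <<[set phi n m; psi n m; tau n m]>>%G.

From mathcomp Require Import all_boot all_order all_fingroup all_algebra cyclic.
Set Implicit Arguments. Unset Strict Implicit. Unset Printing Implicit Defensive.
Import GRing.Theory.
Local Open Scope group_scope.

(* A_{n,m} is generated by phi, of order n, and two involutions psi and tau
   which invert phi by conjugation and commute modulo <phi>, as
   [~ psi, tau] = phi^m.  Hence its elements are the words phi^k psi^a tau^b,
   and these 4n words are distinct once psi, tau and psi tau lie outside
   <phi>.  Powers of phi fix the bits of a vertex, which tau and psi tau
   complement; psi could only be a power of phi if the bucket shift 1
   vanished (n = 1) and the bit string 10...0 were a palindrome (m = 1). *)

Lemma gen_sub_mulr_closed (gT : finGroupType) (A W : {set gT}) :
  1 \in W -> (forall w a, w \in W -> a \in A -> w * a \in W) -> <<A>> \subset W.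
Proof.
move=> W1 WA; apply/subsetP => _ /gen_prodgP[k [c Ac ->]].
elim: k c Ac => [|k IHk] c Ac; first by rewrite big_ord0.
by rewrite big_ord_recr /= WA ?IHk.
Qed.

Lemma invg_involution (gT : finGroupType) (x : gT) : x ^+ 2 = 1 -> x^-1 = x.
Proof. by move=> x2; apply/eqP; rewrite eq_invg_mul; apply/eqP. Qed.

Lemma expb_mulg_involution (gT : finGroupType) (x : gT) (b : bool) :
  x ^+ 2 = 1 -> x ^+ b * x = x ^+ ~~ b.
Proof. by case: b => x2; rewrite ?expg1 ?expg0 ?mul1g //; apply: x2. Qed.

Lemma norm_cycle_conjV (gT : finGroupType) (x y : gT) :
  x ^ y = x^-1 -> y \in 'N(<[x]>).
Proof. by move=> xyV; apply/normP; rewrite -cycleJ xyV cycleV. Qed.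

Section CycleByInvolutions.

Variables (gT : finGroupType) (p s t : gT).
Local Notation P := <[p]>.
Hypotheses (s2 : s ^+ 2 = 1) (t2 : t ^+ 2 = 1).
Hypotheses (nPs : s \in 'N(P)) (nPt : t \in 'N(P)) (Pst : [~ s, t] \in P).

Definition word (w : 'I_#[p] * bool * bool) := p ^+ w.1.1 * s ^+ w.1.2 * t ^+ w.2.

Local Notation W := (word @: setT).

Lemma mem_words c q (a b : bool) :
  c \in P -> q \in P -> c * (s ^+ a * t ^+ b) * q \in W.
Proof.
move=> Pc Pq; have nPu : s ^+ a * t ^+ b \in 'N(P) by rewrite groupM ?groupX.
rewrite -mulgA [_ * q]conjgCV mulgA.
have /cycleP[k ->] : c * q ^ (s ^+ a * t ^+ b)^-1 \in P.
  by rewrite groupM // memJ_norm ?groupV.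
apply/imsetP; exists (Ordinal (ltn_pmod k (order_gt0 p)), a, b) => //.
by rewrite /word /= expg_mod_order mulgA.
Qed.

Lemma mem_words1 c (a b : bool) : c \in P -> c * (s ^+ a * t ^+ b) \in W.
Proof. by move=> Pc; rewrite -[_ * _]mulg1 mem_words. Qed.

Lemma gen_sub_words : <<[set p; s; t]>> \subset W.
Proof.
apply: gen_sub_mulr_closed.
  by have := mem_words1 false false (group1 P); rewrite !expg0 !mulg1.
move=> _ x /imsetP[[[k a] b] _ ->]; rewrite /word /= -(mulgA (p ^+ k)).
have Pk : p ^+ k \in P by rewrite mem_cycle.
rewrite !inE -orbA => /or3P[] /eqP ->.
- by rewrite mem_words ?cycle_id.
- case: b.
    have -> : p ^+ k * (s ^+ a * t ^+ true) * s
              = p ^+ k * (s ^+ (~~ a) * t ^+ true) * [~ t, s].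
      by rewrite /= !expg1 -(expb_mulg_involution a s2) -!mulgA (commgC t s) -!mulgA.
    by rewrite mem_words // -invgR groupV.
  have -> : p ^+ k * (s ^+ a * t ^+ false) * s = p ^+ k * (s ^+ (~~ a) * t ^+ false).
    by rewrite !expg0 !mulg1 -mulgA expb_mulg_involution.
  exact: mem_words1.
- by rewrite -mulgA -(mulgA (s ^+ a)) expb_mulg_involution ?mem_words1.
Qed.

Lemma words_sub_gen : W \subset <<[set p; s; t]>>.
Proof.
apply/subsetP => _ /imsetP[w _ ->].
have gen_gens x : x \in [set p; s; t] -> x \in <<[set p; s; t]>> by apply: mem_gen.
by rewrite !groupM ?groupX ?gen_gens // !inE eqxx ?orbT.
Qed.

Lemma gen_eq_words : <<[set p; s; t]>> = W.
Proof. by apply/eqP; rewrite eqEsubset gen_sub_words words_sub_gen. Qed.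

Hypotheses (sP : s \notin P) (tP : t \notin P) (stP : s * t \notin P).

Lemma distinct_rcosets_st (a b a' b' : bool) :
  s ^+ a * t ^+ b * (s ^+ a' * t ^+ b')^-1 \in P -> (a, b) = (a', b').
Proof.
have sV := invg_involution s2; have tV := invg_involution t2.
have tsP : t * s \notin P by rewrite (commgC t s) groupMr // -invgR groupV.
have stsP : s * (t * s) \notin P by rewrite -{1}sV -conjgE memJ_norm.
(* Off the diagonal the quotient reduces to one of s, t, s t, t s, s (t s). *)
case: a a' b b' => [] [] [] [] //=;
  rewrite ?(expg1, expg0, mulg1, mul1g, invMg, invg1) -?mulgA ?(mulKVg, mulgV)
          ?mulg1 ?sV ?tV => uP.
all: by move: sP tP stP tsP stsP; rewrite uP.
Qed.

Lemma word_inj : injective word.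
Proof.
move=> [[k a] b] [[k' a'] b']; rewrite /word /= -!mulgA => E.
have /distinct_rcosets_st[eq_a eq_b] : s ^+ a * t ^+ b * (s ^+ a' * t ^+ b')^-1 \in P.
  by rewrite (canRL (mulKg _) E) (mulgA (p ^- k)) mulgK groupM ?groupV ?mem_cycle.
subst a' b'.
by move: E => /mulIg/eqP; rewrite eq_expg_ord // => /eqP ->.
Qed.

Lemma card_gen_cycle_involutions : #|<<[set p; s; t]>>| = (4 * #[p])%N.
Proof.
rewrite gen_eq_words card_imset; last exact: word_inj.
by rewrite cardsT !card_prod card_ord card_bool -mulnA mulnC.
Qed.

End CycleByInvolutions.

Section YokeMaps.

Variables n m : nat.
Hypothesis n_gt0 : (0 < n)%N.
Local Notation phi := (phi n m).
Local Notation psi := (psi n m).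
Local Notation tau := (tau n m).

Lemma val_zn k : val (zn n k) = (k %% n)%N.
Proof. by case: n n_gt0 => // n' _; rewrite /zn Zp_mulrn /= modnMml mul1n. Qed.

Lemma zn_eq0 k : (zn n k == 0)%R = (n %| k)%N.
Proof. by rewrite -val_eqE val_zn. Qed.

Lemma val_phiX k v :
  val ((phi ^+ k) v) = ((val v).1.1 + zn n k, (val v).1.2, (val v).2 - zn n k)%R.
Proof.
elim: k => [|k IHk].
  by rewrite expg0 perm1 /zn !mulr0n addr0 subr0; case: (val v) => [[]].
by rewrite expgSr permM permE /= IHk /phi_raw /zn /= mulr1n mulrSr addrA opprD addrA.
Qed.

Lemma val_psi v : val (psi v) = psi_raw (val v).
Proof. by rewrite permE. Qed.

Lemma val_tau v : val (tau v) = tau_raw (val v).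
Proof. by rewrite permE. Qed.

Lemma val_phi v : val (phi v) = phi_raw (val v).
Proof. by rewrite permE. Qed.

Lemma psi_involution : psi ^+ 2 = 1.
Proof. by apply/permP => v; rewrite permM perm1 !permE psiVK. Qed.

Lemma tau_involution : tau ^+ 2 = 1.
Proof. by apply/permP => v; rewrite permM perm1 !permE tauVK. Qed.

Lemma conj_phi_psi : phi ^ psi = phi^-1.
Proof.
apply/esym/eqP; rewrite eq_invg_mul conjgE invg_involution ?psi_involution //.
apply/eqP/permP => v; apply/val_inj; rewrite !permM perm1 !(val_psi, val_phi).
case: (val v) => [[a x] b]; rewrite /phi_raw /psi_raw /= subrK addrK.
by congr (_, _, _); apply/val_inj/revK.
Qed.

Lemma conj_phi_tau : phi ^ tau = phi^-1.
Proof.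
apply/esym/eqP; rewrite eq_invg_mul conjgE invg_involution ?tau_involution //.
apply/eqP/permP => v; apply/val_inj; rewrite !permM perm1 !(val_tau, val_phi).
case: (val v) => [[a x] b]; rewrite /phi_raw /tau_raw /=.
rewrite !opprD !opprK addrK -addrA subrK addKr.
by congr (_, _, _); apply/val_inj/(mapK negbK).
Qed.

Lemma commg_psi_tau : [~ psi, tau] = phi ^+ m.
Proof.
rewrite /commg conjgE !invg_involution ?psi_involution ?tau_involution //.
apply/permP => v; apply/val_inj; rewrite !permM !(val_tau, val_psi) val_phiX.
case: (val v) => [[a x] b]; rewrite /psi_raw /tau_raw /= opprK opprB addrC.
by congr (_, _, _); apply/val_inj; rewrite /= map_rev (mapK negbK) revK.
Qed.

Lemma bits_vertex_ok (x : m.-tuple bool) :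
  vtx_ok ((0, x, - zn n (count id x))%R : raw n m).
Proof. by rewrite /vtx_ok /= add0r subrr. Qed.

Definition bits_vertex (x : m.-tuple bool) : Vtx n m := Sub _ (bits_vertex_ok x).

Local Notation zero_vertex := (bits_vertex (nseq_tuple m false)).

Lemma zn0 : zn n 0 = 0%R.
Proof. by rewrite /zn mulr0n. Qed.

Lemma order_phi : #[phi] = n.
Proof.
apply/eqP; rewrite eqn_dvd order_dvdn; apply/andP; split.
  apply/eqP/permP => v; apply/val_inj; rewrite val_phiX perm1.
  have /eqP -> : zn n n == 0%R by rewrite zn_eq0.
  by rewrite addr0 subr0; case: (val v) => [[]].
have /(congr1 (fun g : {perm Vtx n m} => (val (g zero_vertex)).1.1)) := expg_order phi.
by rewrite val_phiX perm1 /= add0r => /eqP; rewrite zn_eq0.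
Qed.

Lemma bits_cycle_phi v g : g \in <[phi]> -> (val (g v)).1.2 = (val v).1.2.
Proof. by case/cycleP => k ->; rewrite val_phiX. Qed.

Lemma tau_notin_cycle : (0 < m)%N -> tau \notin <[phi]>.
Proof.
move=> m_gt0; apply/negP => /(bits_cycle_phi zero_vertex)/(congr1 val).
by rewrite val_tau /= map_nseq; case: m m_gt0.
Qed.

Lemma psi_tau_notin_cycle : (0 < m)%N -> psi * tau \notin <[phi]>.
Proof.
move=> m_gt0; apply/negP => /(bits_cycle_phi zero_vertex)/(congr1 val).
by rewrite permM val_tau val_psi /= rev_nseq map_nseq; case: m m_gt0.
Qed.

Lemma psi_notin_cycle : (0 < m)%N -> (n, m) <> (1%N, 1%N) -> psi \notin <[phi]>.
Proof.
move=> m_gt0 nm11; apply/negP => /cycleP[k psi_k].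
have at_vertex x := congr1 (fun g : {perm Vtx n m} => val (g (bits_vertex x))) psi_k.
have sz : size (true :: nseq m.-1 false) == m by rewrite /= size_nseq prednK.
move: (at_vertex (nseq_tuple m false)) (at_vertex (Tuple sz)).
rewrite /= !val_psi !val_phiX /psi_raw /= !count_nseq mul0n addn0 zn0 oppr0 add0r.
move=> /(congr1 (fun y => y.1.1)) /= zk0 [z1 rev_x1 _].
have n1 : n = 1%N.
  by move/eqP: z1; rewrite -zk0 oppr_eq0 zn_eq0 dvdn1 => /eqP.
have m1 : m.-1 = 0%N.
  by move: rev_x1; rewrite rev_cons rev_nseq; case: m.-1 => // j [].
by apply: nm11; rewrite n1 -(prednK m_gt0) m1.
Qed.

End YokeMaps.

Theorem lemma6p11 (n m : nat) :
  (1 <= n)%N -> (0 < m)%N -> (n, m) <> (1%N, 1%N) ->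
  #|A_group n m| = (4 * n)%N.
Proof.
move=> n_gt0 m_gt0 nm11.
rewrite /A_group /= card_gen_cycle_involutions ?order_phi //.
- exact: psi_involution.
- exact: tau_involution.
- exact/norm_cycle_conjV/conj_phi_psi.
- exact/norm_cycle_conjV/conj_phi_tau.
- by rewrite commg_psi_tau // mem_cycle.
- exact: psi_notin_cycle.
- exact: tau_notin_cycle.
- exact: psi_tau_notin_cycle.
Qed.
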